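(* Let $k$ be a positive integer and let $p$ be the smallest positive integer such that $k<\kappa_p$ (in dimension $2$). Assume $p$ is a multiple of $4$. If $k-\kappa_{p-1}$ is not an odd multiple of $p/2$, then there exists a subset $\mathcal{X}$ of $\mathbb{P}^2_\circ$ with $\kappa(\mathcal{X})\le k$ and $|\mathcal{X}|=\lfloor\lambda(2,k)\rfloor$. Otherwise, there exists a subset $\mathcal{X}$ of $\mathbb{P}^2_\circ$ with $\kappa(\mathcal{X})\le k$ and $|\mathcal{X}|=\lfloor\lambda(2,k)\rfloor-1$.
   Context: A point of $\mathbb{Z}^2$ is primitive if its coordinates are relatively prime; $\mathbb{P}^2_\circ$ denotes the set of primitive points of $\mathbb{Z}^2$ whose first non-zero coordinate is positive. For a finite $\mathcal{X}\subset\mathbb{R}^2$, $\kappa(\mathcal{X})=\max_{i\in\{1,2\}}\sum_{x\in\mathcal{X}}|x_i|$. $B(2,p)=\{x\in\mathbb{R}^2:\|x\|_1\le p\}$; $N_p=|B(2,p)\cap\mathbb{P}^2_\circ|$ and $\kappa_p=\kappa(B(2,p)\cap\mathbb{P}^2_\circ)$ (with $N_0=\kappa_0=0$). With $p$ as in the claim, $\lambda(2,k)=N_{p-1}+\frac{2(k-\kappa_{p-1})}{p}$. *)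

From mathcomp Require Import all_boot all_order all_algebra.
Set Implicit Arguments. Unset Strict Implicit. Unset Printing Implicit Defensive.
Import Order.TTheory GRing.Theory Num.Theory.

Definition pt := (int * int)%type.

(* x is in P^2_o: coprime coordinates, first non-zero coordinate positive *)
Definition primb (x : pt) : bool :=
  (gcdz x.1 x.2 == 1%N) && ((0 < x.1)%R || ((x.1 == 0) && (0 < x.2)%R)).

(* kappa of a finite set (given as a duplicate-free list) *)
Definition kappa (X : seq pt) : nat :=
  maxn (\sum_(x <- X) `|x.1|%N) (\sum_(x <- X) `|x.2|%N).

Definition rng (p : nat) : seq int := [seq (i%:Z - p%:Z)%R | i <- iota 0 (2 * p).+1].

Definition ballP (p : nat) : seq pt :=
  [seq x <- [seq (a, b) | a <- rng p, b <- rng p]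
     | primb x && (`|x.1|%N + `|x.2|%N <= p)].

Definition Np (p : nat) : nat := size (ballP p).
Definition kappap (p : nat) : nat := kappa (ballP p).

Definition lambda2 (p k : nat) : rat :=
  ((Np p.-1)%:R + 2%:R * ((k%:Z - (kappap p.-1)%:Z)%:~R) / p%:R)%R.

From mathcomp Require Import all_boot all_order all_algebra.
From mathcomp Require Import zify.
Import Order.TTheory GRing.Theory Num.Theory.

(* Let r = k - kappa_{p-1} and t = floor(2r/p). Take B(2,p-1) together with t
   primitive points of l1-norm p. For 0 < a < p/2 coprime to p, the points
   (a, p-a), (p-a, -a), (p-a, a), (a, -(p-a)) form two complementary pairs, each
   raising both coordinate sums by exactly p; these points exhaust the primitive
   points of norm p, so k < kappa_p gives t < 4u (u the number of such a), and
   floor(t/2) pairs fit in the budget r. When t is odd one more point is needed: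
   as 4 | p, a = p/2 - 1 is odd, hence coprime to p, and (p/2 - 1, p/2 + 1) costs
   p/2 + 1 in each coordinate, which fits unless 2r = tp, i.e. unless r is an odd
   multiple of p/2; then t - 1 points are taken. *)

Definition norm1 (x : pt) : nat := `|x.1| + `|x.2|.

Lemma mem_rng q z : (z \in rng q) = (`|z| <= q).
Proof.
apply/mapP/idP => [[i]|z_le]; first by rewrite mem_iota => i_lt ->; lia.
by exists `|(z + q%:Z)%R|; [rewrite mem_iota; lia | lia].
Qed.

Lemma mem_ballP q x : (x \in ballP q) = primb x && (norm1 x <= q).
Proof.
rewrite mem_filter andb_idr // => /andP[_ x_le].
case: x x_le => a b ab_le; apply/allpairsP; exists (a, b).
by rewrite !mem_rng; move: ab_le; rewrite /norm1 /=; split => //; lia.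
Qed.

Lemma ballP_uniq q : uniq (ballP q).
Proof.
have rng_uniq : uniq (rng q) by rewrite map_inj_uniq ?iota_uniq // => i j /= /eqP; lia.
by rewrite filter_uniq // allpairs_uniq // => -[a b] [c d].
Qed.

Lemma leq_kappa_cat s t : kappa (s ++ t) <= kappa s + kappa t.
Proof.
by rewrite /kappa !big_cat geq_max; apply/andP; split; apply: leq_add;
  rewrite ?leq_maxl ?leq_maxr.
Qed.

Lemma uniq_leq_kappa s t : uniq s -> uniq t -> {subset s <= t} -> kappa s <= kappa t.
Proof.
move=> s_uniq t_uniq st.
have le_sum (f : pt -> nat) : \sum_(x <- s) f x <= \sum_(x <- t) f x.
  exact: (uniq_sub_le_big leqnn (fun m n => leq_addr n m)).
by rewrite /kappa geq_max !(leq_trans (le_sum _)) ?leq_maxl ?leq_maxr.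
Qed.

Definition unpair (P : seq (pt * pt)) : seq pt := flatten [seq [:: z.1; z.2] | z <- P].

Definition complementary (p : nat) (z : pt * pt) : bool :=
  (`|z.1.1| + `|z.2.1| == p) && (`|z.1.2| + `|z.2.2| == p).

Lemma size_unpair P : size (unpair P) = 2 * size P.
Proof. by elim: P => //= z P ->; rewrite mulnS. Qed.

Lemma unpair_take_drop m P : unpair P = unpair (take m P) ++ unpair (drop m P).
Proof. by rewrite /unpair -flatten_cat -map_cat cat_take_drop. Qed.

Lemma subseq_unpair_take m P : subseq (unpair (take m P)) (unpair P).
Proof. by rewrite [X in subseq _ X](unpair_take_drop m) prefix_subseq. Qed.

Lemma kappa_unpair p P : all (complementary p) P -> kappa (unpair P) = size P * p.
Proof.
move=> /allP P_compl.
have sum_pairs (c : pt -> int) : {in P, forall z, `|c z.1| + `|c z.2| = p} ->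
    \sum_(x <- unpair P) `|c x| = size P * p.
  move=> cP; rewrite big_flatten big_map (eq_big_seq (fun=> p)) => [|z /cP <-].
    by rewrite big_const_seq count_predT iter_addn_0 mulnC.
  by rewrite big_cons big_seq1.
have c1 : {in P, forall z, `|z.1.1| + `|z.2.1| = p} by move=> z /P_compl /andP[/eqP].
have c2 : {in P, forall z, `|z.1.2| + `|z.2.2| = p} by move=> z /P_compl /andP[_ /eqP].
by rewrite /kappa (sum_pairs (fun x => x.1) c1) (sum_pairs (fun x => x.2) c2) maxnn.
Qed.

Definition shell_pt (p a i : nat) : pt :=
  match i with
  | 0 => (Posz a, Posz (p - a))
  | 1 => (Posz (p - a), (- Posz a)%R)
  | 2 => (Posz (p - a), Posz a)
  | _ => (Posz a, (- Posz (p - a))%R)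
  end.

Definition quad_pairs (p a : nat) : seq (pt * pt) :=
  [:: (shell_pt p a 0, shell_pt p a 1); (shell_pt p a 2, shell_pt p a 3)].

Definition shell_pairs (p : nat) (U : seq nat) : seq (pt * pt) :=
  flatten (map (quad_pairs p) U).

Definition shell (p : nat) (U : seq nat) : seq pt := unpair (shell_pairs p U).

Definition small_coprimes (p : nat) : seq nat :=
  [seq a <- iota 1 p | (2 * a < p) && coprime a p].

Lemma shellE p U : shell p U = [seq shell_pt p a i | a <- U, i <- iota 0 4].
Proof. by elim: U => //= a U <-. Qed.

Lemma size_shell_pairs p U : size (shell_pairs p U) = 2 * size U.
Proof. by elim: U => //= a U ->; rewrite mulnS. Qed.

Lemma mem_small_coprimes p a :
  (a \in small_coprimes p) = [&& 0 < a, 2 * a < p & coprime a p].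
Proof. by rewrite mem_filter mem_iota; case: coprime; rewrite /= ?andbF //; lia. Qed.

Lemma shell_pt_inj p a b i j : 0 < a -> 2 * a < p -> 0 < b -> 2 * b < p ->
  i < 4 -> j < 4 -> shell_pt p a i = shell_pt p b j -> (a, i) = (b, j).
Proof.
move=> a_gt0 a_lt b_gt0 b_lt.
by case: i => [|[|[|[|i]]]] // _; case: j => [|[|[|[|j]]]] // _ [] *; congr pair; lia.
Qed.

Lemma norm1_shell_pt p a i : a <= p -> norm1 (shell_pt p a i) = p.
Proof. by move=> a_le; case: i => [|[|[|i]]]; rewrite /norm1 /= ?abszN; lia. Qed.

Lemma primb_shell_pt p a i : 0 < a < p -> coprime a p -> primb (shell_pt p a i).
Proof.
move=> /andP[a_gt0 a_lt] co_ap.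
have co_a_pa : coprime a (p - a).
  by rewrite /coprime -[in gcdn a p](subnKC (ltnW a_lt)) gcdnDl in co_ap.
have co_pa_a : coprime (p - a) a by rewrite coprime_sym.
rewrite /primb /gcdz; case: i => [|[|[|i]]] /=;
  by rewrite ?abszN ?absz_nat ?(eqP co_a_pa) ?(eqP co_pa_a) ?ltz_nat ?subn_gt0 ?a_gt0 ?a_lt.
Qed.

Section ShellOfCoprimes.

Variables (p : nat) (U : seq nat).
Hypothesis U_sub : {subset U <= small_coprimes p}.

Lemma shell_coprimes_bounds a : a \in U -> [/\ 0 < a, 2 * a < p & coprime a p].
Proof. by move=> /U_sub; rewrite mem_small_coprimes => /and3P. Qed.

Lemma shell_uniq : uniq U -> uniq (shell p U).
Proof.
move=> U_uniq; rewrite shellE; apply: allpairs_uniq; rewrite ?iota_uniq //.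
move=> _ _ /allpairsP[[a i] [aU i_lt ->]] /allpairsP[[b j] [bU j_lt ->]] /=.
have [a_gt0 a_lt _] := shell_coprimes_bounds _ aU.
have [b_gt0 b_lt _] := shell_coprimes_bounds _ bU.
by apply: shell_pt_inj => //; [move: i_lt | move: j_lt]; rewrite mem_iota.
Qed.

Lemma mem_shell x :
  x \in shell p U -> exists a i, [/\ a \in U, i < 4 & x = shell_pt p a i].
Proof.
by rewrite shellE => /allpairsP[[a i] [aU i_lt ->]]; exists a, i; rewrite mem_iota in i_lt.
Qed.

Lemma shell_primb : all primb (shell p U).
Proof.
apply/allP => _ /mem_shell[a [i [aU _ ->]]].
have [a_gt0 a_lt co_ap] := shell_coprimes_bounds _ aU.
by apply: primb_shell_pt; rewrite // a_gt0; lia.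
Qed.

Lemma norm1_shell : {in shell p U, forall x, norm1 x = p}.
Proof.
move=> _ /mem_shell[a [i [aU _ ->]]]; apply: norm1_shell_pt.
by have [_ a_lt _] := shell_coprimes_bounds _ aU; lia.
Qed.

Lemma shell_pairs_complementary : all (complementary p) (shell_pairs p U).
Proof.
apply/allP => z /flatten_mapP[a aU].
have [_ a_lt _] := shell_coprimes_bounds _ aU.
by rewrite !inE => /orP[] /eqP->; rewrite /complementary /= ?abszN;
  apply/andP; split; apply/eqP; lia.
Qed.

End ShellOfCoprimes.

Lemma shell_pt_mem p U a i : a \in U -> i < 4 -> shell_pt p a i \in shell p U.
Proof. by move=> aU i_lt; rewrite shellE; apply: allpairs_f; rewrite // mem_iota. Qed.

Lemma shell_complete p x : 2 < p -> primb x -> norm1 x = p ->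
  x \in shell p (small_coprimes p).
Proof.
case: x => a b p_gt2; rewrite /primb /norm1 /= => /andP[/eqP gcd_ab sign_ab] ab_norm.
have {gcd_ab} gcd_ab : gcdn `|a| `|b| = 1 by case: gcd_ab.
have a_gt0 : (0 < a)%R.
  by case/orP: sign_ab => // /andP[/eqP a0 _]; move: gcd_ab; rewrite a0 gcd0n; lia.
have b_gt0 : 0 < `|b| by rewrite lt0n; apply/eqP => b0; move: gcd_ab; rewrite b0 gcdn0; lia.
have a_neq_b : `|a| != `|b| by apply/eqP => ab; move: gcd_ab; rewrite ab gcdnn; lia.
have co_a : coprime `|a| p by rewrite /coprime -ab_norm gcdnDl gcd_ab.
have co_b : coprime `|b| p by rewrite /coprime -ab_norm gcdnDr gcdnC gcd_ab.
suff [c [i [cU i_lt ->]]] : exists c i,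
    [/\ c \in small_coprimes p, i < 4 & (a, b) = shell_pt p c i] by exact: shell_pt_mem.
have [a_small | a_large] := ltnP (2 * `|a|) p.
  have aU : `|a| \in small_coprimes p by rewrite mem_small_coprimes co_a a_small; lia.
  have [b_ge0 | b_lt0] := lerP 0 b.
    by exists `|a|, 0; split => //=; congr pair; lia.
  by exists `|a|, 3; split => //=; congr pair; lia.
have bU : `|b| \in small_coprimes p by rewrite mem_small_coprimes co_b; lia.
have [b_ge0 | b_lt0] := lerP 0 b.
  by exists `|b|, 2; split => //=; congr pair; lia.
by exists `|b|, 1; split => //=; congr pair; lia.
Qed.

Lemma small_coprimes_uniq p : uniq (small_coprimes p).
Proof. by rewrite filter_uniq ?iota_uniq. Qed.

Lemma ballP_cat_uniq p L : 0 < p -> uniq L -> {in L, forall x, norm1 x = p} ->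
  uniq (ballP p.-1 ++ L).
Proof.
move=> p_gt0 L_uniq L_norm; rewrite cat_uniq ballP_uniq L_uniq andbT /=.
by apply/hasPn => x /L_norm x_norm; rewrite mem_ballP x_norm; lia.
Qed.

Lemma kappap_le p : 2 < p -> kappap p <= kappap p.-1 + 2 * size (small_coprimes p) * p.
Proof.
move=> p_gt2; set U := small_coprimes p.
have U_uniq : uniq U := small_coprimes_uniq p.
have sub : {subset ballP p <= ballP p.-1 ++ shell p U}.
  move=> x; rewrite mem_cat !mem_ballP => /andP[x_prim x_le]; rewrite x_prim /=.
  have [//|x_gt] := leqP (norm1 x) p.-1.
  by apply: shell_complete; rewrite //; lia.
apply: leq_trans (uniq_leq_kappa _ _ (ballP_uniq p) _ sub) _.
  by apply: ballP_cat_uniq; [lia | exact: shell_uniq | exact: norm1_shell].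
apply: leq_trans (leq_kappa_cat _ _) _.
rewrite leq_add2l /shell (kappa_unpair p) ?size_shell_pairs ?mulnA //.
exact: shell_pairs_complementary.
Qed.

Lemma subshell_extension p k U L : 0 < p -> uniq U -> {subset U <= small_coprimes p} ->
  subseq L (shell p U) -> kappap p.-1 + kappa L <= k ->
  exists X, [/\ uniq X, all primb X, kappa X <= k & size X = Np p.-1 + size L].
Proof.
move=> p_gt0 U_uniq U_sub L_sub L_kappa; have L_mem := mem_subseq L_sub.
exists (ballP p.-1 ++ L); split.
- apply: ballP_cat_uniq => //; first by apply: subseq_uniq L_sub _; apply: shell_uniq.
  by move=> x /L_mem; apply: norm1_shell.
- rewrite all_cat; apply/andP; split; apply/allP => x.
    by rewrite mem_ballP => /andP[].
  by move=> /L_mem; apply/allP/shell_primb.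
- exact: leq_trans (leq_kappa_cat _ _) L_kappa.
- by rewrite size_cat.
Qed.

Lemma pred_half_small_coprime p : 0 < p -> 4 %| p -> (p %/ 2).-1 \in small_coprimes p.
Proof.
move=> p_gt0 /dvdnP[q p_eq]; set a0 := (p %/ 2).-1.
have a0_odd : odd a0 by rewrite /a0; lia.
have p_def : p = 2 * a0 + 2 by rewrite /a0; lia.
rewrite mem_small_coprimes /coprime [in gcdn _ p]p_def gcdnMDl -/(coprime a0 2) coprimen2.
by rewrite a0_odd andbT; lia.
Qed.

Section ShellExtension.

Context {p k : nat}.
Hypotheses (p_gt0 : 0 < p) (kappa_le : kappap p.-1 <= k).

Let U := small_coprimes p.
Let r := k - kappap p.-1.

Lemma extend_even m : m <= 2 * size U -> m * p <= r ->
  exists X, [/\ uniq X, all primb X, kappa X <= k & size X = Np p.-1 + 2 * m].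
Proof.
move=> m_le m_r; set P := take m (shell_pairs p U).
have P_size : size P = m by rewrite size_takel ?size_shell_pairs.
have P_compl : all (complementary p) P.
  by apply/allP => z /mem_take; apply/allP/shell_pairs_complementary.
have := @subshell_extension p k U (unpair P) p_gt0 (small_coprimes_uniq p).
rewrite size_unpair P_size; apply=> //; first exact: subseq_unpair_take.
by rewrite (kappa_unpair _ _ P_compl) P_size; rewrite /r in m_r; lia.
Qed.

Lemma extend_odd m : 4 %| p -> m < 2 * size U -> m * p + p %/ 2 + 1 <= r ->
  exists X, [/\ uniq X, all primb X, kappa X <= k & size X = Np p.-1 + (2 * m).+1].
Proof.
move=> p4 m_lt m_r; set a0 := (p %/ 2).-1.
have a0U : a0 \in U := pred_half_small_coprime _ p_gt0 p4.
set V := a0 :: rem a0 U.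
have V_uniq : uniq V by rewrite /= mem_rem_uniqF ?rem_uniq // small_coprimes_uniq.
have V_sub : {subset V <= U} by move=> a; rewrite inE => /predU1P[-> // | /mem_rem].
set P := take m (behead (shell_pairs p V)).
have V_size : size V = size U by rewrite (perm_size (perm_to_rem a0U)).
have P_size : size P = m by rewrite size_takel // size_behead size_shell_pairs V_size; lia.
have P_compl : all (complementary p) P.
  apply/allP => z /mem_take /mem_behead; apply/allP/shell_pairs_complementary.
  exact: V_sub.
have shellV : shell p V =
    [:: shell_pt p a0 0] ++ shell_pt p a0 1 :: unpair (behead (shell_pairs p V)) by [].
have := @subshell_extension p k V ([:: shell_pt p a0 0] ++ unpair P) p_gt0 V_uniq V_sub.
rewrite size_cat size_unpair P_size; apply.
  rewrite shellV subseq_cat2l.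
  exact: subseq_trans (subseq_unpair_take _ _) (subseq_cons _ _).
apply: leq_trans (leq_add (leqnn _) (leq_kappa_cat _ _)) _.
rewrite (kappa_unpair _ _ P_compl) P_size /kappa !big_seq1 /=.
by rewrite /r /a0 in m_r *; lia.
Qed.

Lemma extend_shell n : 4 %| p -> n < 4 * size U -> n * p <= 2 * r ->
    (odd n -> n * p != 2 * r) ->
  exists X, [/\ uniq X, all primb X, kappa X <= k & size X = Np p.-1 + n].
Proof.
move=> p4 n_lt n_le n_odd; have n_eq := odd_double_half n; set m := n./2 in n_eq.
have [odd_n | even_n] := boolP (odd n).
  have /eqP n_ne := n_odd odd_n.
  have [||X [X_uniq X_prim X_kappa X_size]] := extend_odd m p4; try lia.
  by exists X; split => //; lia.
have [||X [X_uniq X_prim X_kappa X_size]] := extend_even m; try lia.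
by exists X; split => //; lia.
Qed.

End ShellExtension.

Lemma floor_lambda2 p k : 0 < p -> kappap p.-1 <= k ->
  Num.floor (lambda2 p k) = Posz (Np p.-1 + (2 * (k - kappap p.-1)) %/ p).
Proof.
move=> p_gt0 kappa_le; apply: floor_def.
rewrite /lambda2 subzn // -!pmulrn !natrD -natrM -addrA lerD2l ltrD2l.
have p_pos : (0 < p%:R :> rat)%R by rewrite ltr0n.
rewrite ler_pdivlMr ?ltr_pdivrMr // -natrD -!natrM ler_nat ltr_nat.
by rewrite leq_divM addn1 ltn_ceil.
Qed.

Lemma odd_multiple_halfP p r : 0 < p -> ~~ odd p ->
  (exists m : int, odd `|m| /\ Posz r = (m * Posz (p %/ 2))%R) <->
  odd (2 * r %/ p) /\ 2 * r %/ p * p = 2 * r.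
Proof.
move=> p_gt0 p_even; have half_p : 2 * (p %/ 2) = p by lia.
split=> [[m [m_odd r_m]] | [t_odd tp_eq]].
  have r_eq : r = `|m| * (p %/ 2) by rewrite -[r]absz_nat r_m abszM.
  by rewrite r_eq mulnCA half_p mulnK.
exists (Posz (2 * r %/ p)); split => //; rewrite -PoszM; congr Posz.
by apply/eqP; rewrite -(eqn_pmul2l (isT : 0 < 2)) mulnCA half_p tp_eq.
Qed.

Local Open Scope ring_scope.

Theorem lemma5p1 (k p : nat) :
  (0 < k)%N ->
  (0 < p)%N -> (k < kappap p)%N ->
  (forall q : nat, (0 < q)%N -> (q < p)%N -> (kappap q <= k)%N) ->
  (4 %| p)%N ->
  ((~ exists m : int, odd `|m|%N /\
        (k%:Z - (kappap p.-1)%:Z)%R = (m * (p %/ 2)%N%:Z)%R) ->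
     exists X : seq pt, [/\ uniq X, all primb X, (kappa X <= k)%N &
        (size X)%:Z = Num.floor (lambda2 p k)])
  /\
  ((exists m : int, odd `|m|%N /\
        (k%:Z - (kappap p.-1)%:Z)%R = (m * (p %/ 2)%N%:Z)%R) ->
     exists X : seq pt, [/\ uniq X, all primb X, (kappa X <= k)%N &
        (size X)%:Z = (Num.floor (lambda2 p k) - 1)%R]).
Proof.
move=> _ p_gt0 k_lt p_min p4.
have p_even : ~~ odd p by lia.
have kappa_le : (kappap p.-1 <= k)%N by apply: p_min; lia.
rewrite floor_lambda2 // subzn //.
set r := (k - kappap p.-1)%N; set t := (2 * r %/ p)%N.
have t_lt : (t < 4 * size (small_coprimes p))%N.
  have p_gt2 : (2 < p)%N by lia.
  by rewrite ltn_divLR //; have := kappap_le _ p_gt2; nia.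
have tp_le : (t * p <= 2 * r)%N := leq_divM _ _.
split=> [not_odd_multiple | /odd_multiple_halfP[] // t_odd tp_eq].
  have [t_odd|X [X_uniq X_prim X_kappa X_size]] :=
    extend_shell p_gt0 kappa_le t p4 t_lt tp_le.
    by apply/eqP => tp_eq; apply: not_odd_multiple; apply/odd_multiple_halfP.
  by exists X; rewrite X_size.
have [|||X [X_uniq X_prim X_kappa X_size]] := extend_shell p_gt0 kappa_le t.-1 p4; try lia.
by exists X; split => //; rewrite X_size; lia.
Qed.
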